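(* Let $k\ge 1$ be an integer and $q=2^{-1/k}$. Let $T_k$ be any binary prefix code for the finite set $\mathcal{A}_k=\{(i,j):0\le i,j<k\}$ that is optimal (minimizes $\sum_{(i,j)\in\mathcal{A}_k} q^{i+j}|T_k(i,j)|$) for the weights $w(i,j)=q^{i+j}$ (for $k=1$, $T_1$ assigns the empty word to the single symbol). Then the code $$C_k(i,j)=T_k(i\bmod k,\ j\bmod k)\cdot G_1(\lfloor i/k\rfloor)\cdot G_1(\lfloor j/k\rfloor),\qquad i,j\ge0,$$ where $\cdot$ denotes concatenation of binary strings and $G_1(n)$ is the unary codeword ($n$ ones followed by a zero), is an optimal prefix code for $\mathrm{TDGD}(q)$.
   Context: $\mathcal{A}=\{(i,j): i,j\in\mathbb{Z}_{\ge 0}\}$; $\mathrm{TDGD}(q)$ is the distribution $P(i,j)=(1-q)^2q^{i+j}$ on $\mathcal{A}$. A code is optimal for $\mathrm{TDGD}(q)$ if it minimizes the expected codeword length among all binary prefix codes for $\mathcal{A}$. *)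

From Stdlib Require Import Reals List Arith.
Open Scope R_scope.

Definition word := list bool.

Definition is_prefix (u v : word) : Prop := exists w, v = u ++ w.

Definition prefix_code (C : nat -> nat -> word) : Prop :=
  forall i j i' j', (i, j) <> (i', j') -> ~ is_prefix (C i j) (C i' j').

(* A binary prefix code for the finite alphabet A_k = {(i,j) : i,j < k}
   (values of C outside A_k are irrelevant). *)
Definition prefix_code_fin (k : nat) (C : nat -> nat -> word) : Prop :=
  forall i j i' j', (i < k)%nat -> (j < k)%nat -> (i' < k)%nat -> (j' < k)%nat ->
    (i, j) <> (i', j') -> ~ is_prefix (C i j) (C i' j').

Fixpoint rsum (n : nat) (f : nat -> R) : R :=
  match n with
  | O => 0
  | S m => rsum m f + f m
  end.

Definition sq_cost (n : nat) (w : nat -> nat -> R) (C : nat -> nat -> word) : R :=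
  rsum n (fun i => rsum n (fun j => w i j * INR (length (C i j)))).

Definition optimal_fin (k : nat) (q : R) (T : nat -> nat -> word) : Prop :=
  prefix_code_fin k T /\
  forall T', prefix_code_fin k T' ->
    sq_cost k (fun i j => q ^ (i + j)) T <= sq_cost k (fun i j => q ^ (i + j)) T'.

Definition tdgd (q : R) (i j : nat) : R := (1 - q) ^ 2 * q ^ (i + j).

(* Expected length (a value in [0, +oo]) is the supremum of the partial sums
   over the squares [0,n)^2, which are cofinal among finite subsets of A.
   E_P[C] <= E_P[D] in the extended reals is thus expressed as below. *)
Definition exp_len_le (P : nat -> nat -> R) (C D : nat -> nat -> word) : Prop :=
  forall n, exists m, sq_cost n P C <= sq_cost m P D.

Definition optimal_tdgd (q : R) (C : nat -> nat -> word) : Prop :=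
  prefix_code C /\
  forall D, prefix_code D -> exp_len_le (tdgd q) C D.

Definition unary (n : nat) : word := repeat true n ++ false :: nil.

Definition qk (k : nat) : R := Rpower 2 (- / INR k).

(* Lagrangian duality.  If 2^n w <= mu <= 2^(n+1) w, then n minimises w m + mu 2^-m over m, so by
   Kraft's inequality every prefix code D satisfies
     sum_s w_s |D s| >= sum_s (w_s n_s + mu 2^-n_s) - mu
   for any such "dual-feasible" lengths n_s.  Since q^k = 1/2, the lengths
   n(i, j) = l(i mod k, j mod k) + i/k + j/k + 2 are dual feasible for the weights q^(i+j)
   (with mu = q^-(c + 2k)) as soon as k l(a, b) <= c + a + b <= k l(a, b) + k.  If moreover
   sum 2^-l = 1, the bound is tight up to a tail that vanishes on large squares, and the
   composed code has lengths n - l + |T|, which cost no more than n because T is optimal and l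
   is realised by a prefix code (converse of Kraft).  Such lengths l are found by lengthening
   the codewords on the k x k square one at a time as the threshold c grows: the Kraft sum
   decreases from above 1 to below 1, and ties are broken so that it cannot skip over 1. *)

From Stdlib Require Import Reals List Arith Lia Lra Permutation Sorted Classical.
Open Scope R_scope.

Fixpoint lsum {A} (l : list A) (f : A -> R) : R :=
  match l with nil => 0 | a :: l' => f a + lsum l' f end.

Lemma lsum_app {A} (l1 l2 : list A) f : lsum (l1 ++ l2) f = lsum l1 f + lsum l2 f.
Proof. induction l1 as [|a l1 IH]; simpl; [|rewrite IH]; ring. Qed.

Lemma lsum_ext {A} (l : list A) f g :
  (forall x, In x l -> f x = g x) -> lsum l f = lsum l g.
Proof. induction l as [|a l IH]; simpl; intros H; [|rewrite H, IH]; auto. Qed.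

Lemma lsum_nonneg {A} (l : list A) f : (forall x, In x l -> 0 <= f x) -> 0 <= lsum l f.
Proof.
  induction l as [|a l IH]; simpl; intros H; [lra|].
  apply Rplus_le_le_0_compat; auto.
Qed.

Lemma lsum_scal {A} (l : list A) c f : lsum l (fun x => c * f x) = c * lsum l f.
Proof. induction l as [|a l IH]; simpl; [|rewrite IH]; ring. Qed.

Lemma lsum_scal_r {A} (l : list A) c f : lsum l (fun x => f x * c) = lsum l f * c.
Proof. induction l as [|a l IH]; simpl; [|rewrite IH]; ring. Qed.

Lemma lsum_map {A B} (h : A -> B) l f : lsum (map h l) f = lsum l (fun x => f (h x)).
Proof. induction l as [|a l IH]; simpl; [|rewrite IH]; auto. Qed.

Lemma lsum_filter {A} (p : A -> bool) l f :
  lsum l f = lsum (filter p l) f + lsum (filter (fun x => negb (p x)) l) f.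
Proof. induction l as [|a l IH]; simpl; [ring|]. destruct (p a); simpl; rewrite IH; ring. Qed.

Lemma lsum_perm {A} (l l' : list A) f : Permutation l l' -> lsum l f = lsum l' f.
Proof. induction 1; simpl; congruence || ring. Qed.

Lemma lsum_prod {A B} (l : list A) (l' : list B) G :
  lsum (list_prod l l') G = lsum l (fun i => lsum l' (fun j => G (i, j))).
Proof. induction l as [|a l IH]; simpl; [|rewrite lsum_app, lsum_map, IH]; auto. Qed.

Fixpoint nsum {A} (l : list A) (f : A -> nat) : nat :=
  match l with nil => 0 | a :: l' => f a + nsum l' f end.

Lemma INR_nsum {A} (l : list A) f : INR (nsum l f) = lsum l (fun x => INR (f x)).
Proof. induction l as [|a l IH]; simpl; [|rewrite plus_INR, IH]; auto. Qed.

Lemma nsum_ge_term {A} (l : list A) f x : In x l -> (f x <= nsum l f)%nat.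
Proof.
  induction l as [|a l IH]; simpl; [contradiction|].
  intros [<-|H]; [|specialize (IH H)]; lia.
Qed.

Lemma rsum_ext n f g : (forall i, (i < n)%nat -> f i = g i) -> rsum n f = rsum n g.
Proof. induction n as [|n IH]; simpl; intros H; [|rewrite IH, H]; auto. Qed.

Lemma rsum_le n f g : (forall i, (i < n)%nat -> f i <= g i) -> rsum n f <= rsum n g.
Proof. induction n as [|n IH]; simpl; intros H; [lra|]. apply Rplus_le_compat; auto. Qed.

Lemma rsum_nonneg n f : (forall i, (i < n)%nat -> 0 <= f i) -> 0 <= rsum n f.
Proof.
  induction n as [|n IH]; simpl; intros H; [lra|].
  apply Rplus_le_le_0_compat; auto.
Qed.

Lemma rsum_scal n c f : rsum n (fun i => c * f i) = c * rsum n f.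
Proof. induction n as [|n IH]; simpl; [|rewrite IH]; ring. Qed.

Lemma rsum_scal_r n c f : rsum n (fun i => f i * c) = rsum n f * c.
Proof. induction n as [|n IH]; simpl; [|rewrite IH]; ring. Qed.

Lemma rsum_plus n f g : rsum n (fun i => f i + g i) = rsum n f + rsum n g.
Proof. induction n as [|n IH]; simpl; [|rewrite IH]; ring. Qed.

Lemma rsum_add n m f : rsum (n + m) f = rsum n f + rsum m (fun a => f (n + a)%nat).
Proof.
  induction m as [|m IH]; simpl; [rewrite Nat.add_0_r; ring|].
  rewrite Nat.add_succ_r; simpl. rewrite IH; ring.
Qed.

Lemma rsum_mono n m f :
  (n <= m)%nat -> (forall i, (i < m)%nat -> 0 <= f i) -> rsum n f <= rsum m f.
Proof.
  intros Hnm H. replace m with (n + (m - n))%nat by lia. rewrite rsum_add.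
  enough (0 <= rsum (m - n) (fun a => f (n + a)%nat)) by lra.
  apply rsum_nonneg; intros; apply H; lia.
Qed.

Lemma rsum_blocks k M f :
  rsum (k * M) f = rsum M (fun x => rsum k (fun a => f (a + k * x)%nat)).
Proof.
  induction M as [|M IH]; simpl; [now rewrite Nat.mul_0_r|].
  replace (k * S M)%nat with (k * M + k)%nat by lia. rewrite rsum_add, IH.
  f_equal. apply rsum_ext; intros; f_equal; lia.
Qed.

Lemma rsum_lsum n f : rsum n f = lsum (seq 0 n) f.
Proof.
  induction n as [|n IH]; [reflexivity|].
  cbn [rsum]. rewrite seq_S, lsum_app, IH; simpl. ring.
Qed.

Lemma rsum_geom_half M : rsum M (fun x => (/2) ^ x) = 2 - 2 * (/2) ^ M.
Proof. induction M as [|M IH]; simpl; [|rewrite IH; field]; lra. Qed.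

Definition sq_sum n (F : nat -> nat -> R) := rsum n (fun i => rsum n (fun j => F i j)).

Definition square n := list_prod (seq 0 n) (seq 0 n).

Lemma in_square n i j : In (i, j) (square n) <-> (i < n /\ j < n)%nat.
Proof. unfold square. rewrite in_prod_iff, !in_seq. lia. Qed.

Lemma NoDup_list_prod {A B} (l : list A) (l' : list B) :
  NoDup l -> NoDup l' -> NoDup (list_prod l l').
Proof.
  intros Hl Hl'. induction Hl as [|a l Ha Hl IH]; simpl; [constructor|].
  apply NoDup_app; auto.
  - apply FinFun.Injective_map_NoDup; auto. intros x y E; now injection E.
  - intros [u v] Hm Hp. apply in_map_iff in Hm as [y [E _]]. injection E as <- <-.
    apply in_prod_iff in Hp. tauto.
Qed.

Lemma NoDup_square n : NoDup (square n).
Proof. apply NoDup_list_prod; apply seq_NoDup. Qed.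

Lemma sq_sum_lsum n F : sq_sum n F = lsum (square n) (fun p => F (fst p) (snd p)).
Proof.
  unfold sq_sum, square. rewrite lsum_prod, rsum_lsum.
  apply lsum_ext; intros. now rewrite rsum_lsum.
Qed.

Lemma sq_sum_ext n F G :
  (forall i j, (i < n)%nat -> (j < n)%nat -> F i j = G i j) -> sq_sum n F = sq_sum n G.
Proof. intros H. apply rsum_ext; intros. apply rsum_ext; auto. Qed.

Lemma sq_sum_le n F G :
  (forall i j, (i < n)%nat -> (j < n)%nat -> F i j <= G i j) -> sq_sum n F <= sq_sum n G.
Proof. intros H. apply rsum_le; intros. apply rsum_le; auto. Qed.

Lemma sq_sum_plus n F G : sq_sum n (fun i j => F i j + G i j) = sq_sum n F + sq_sum n G.
Proof. unfold sq_sum. rewrite <- rsum_plus. apply rsum_ext; intros. apply rsum_plus. Qed.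

Lemma sq_sum_scal n c F : sq_sum n (fun i j => c * F i j) = c * sq_sum n F.
Proof. unfold sq_sum. rewrite <- rsum_scal. apply rsum_ext; intros. apply rsum_scal. Qed.

Lemma sq_sum_scal_r n c F : sq_sum n (fun i j => F i j * c) = sq_sum n F * c.
Proof. unfold sq_sum. rewrite <- rsum_scal_r. apply rsum_ext; intros. apply rsum_scal_r. Qed.

Lemma sq_sum_geom_blocks k M F G :
  (forall a b x y, (a < k)%nat -> (b < k)%nat -> (x < M)%nat -> (y < M)%nat ->
     F (a + k * x)%nat (b + k * y)%nat = (/2) ^ x * (/2) ^ y * G a b) ->
  sq_sum (k * M) F = (2 - 2 * (/2) ^ M) ^ 2 * sq_sum k G.
Proof.
  intros H. rewrite <- rsum_geom_half.
  set (S := rsum M (fun x => (/2) ^ x)).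
  replace (S ^ 2 * sq_sum k G) with (rsum M (fun x => (/2) ^ x * (S * sq_sum k G)))
    by (rewrite rsum_scal_r; change (rsum M (pow (/2))) with S; ring).
  unfold sq_sum at 1. rewrite rsum_blocks.
  apply rsum_ext; intros x Hx. unfold sq_sum. rewrite <- !rsum_scal.
  apply rsum_ext; intros a Ha. rewrite rsum_blocks. unfold S.
  rewrite <- !rsum_scal_r, <- !rsum_scal. apply rsum_ext; intros y Hy.
  rewrite <- !rsum_scal. apply rsum_ext; intros b Hb. rewrite H by auto. ring.
Qed.

Lemma sq_sum_grow n m F :
  (n < m)%nat -> (forall i j, 0 <= F i j) -> sq_sum n F + F n 0%nat <= sq_sum m F.
Proof.
  intros Hnm H. unfold sq_sum.
  apply Rle_trans with (rsum (S n) (fun i => rsum m (fun j => F i j))).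
  - simpl. apply Rplus_le_compat.
    + apply rsum_le; intros. apply rsum_mono; [lia|auto].
    + apply Rle_trans with (rsum 1 (fun j => F n j)); [simpl; lra|].
      apply rsum_mono; [lia|auto].
  - apply rsum_mono; [lia|]. intros. apply rsum_nonneg; auto.
Qed.

(** * Kraft's inequality and its converse *)

Lemma pow2_half n : 2 ^ n * (/2) ^ n = 1.
Proof. rewrite <- Rpow_mult_distr, Rinv_r, pow1; lra. Qed.

Lemma pow_half_pos n : 0 < (/2) ^ n.
Proof. apply pow_lt; lra. Qed.

Lemma pow_le1 x n : 0 <= x <= 1 -> x ^ n <= 1.
Proof. intros H. rewrite <- (pow1 n). apply pow_incr; lra. Qed.

Lemma pow_half_anti a b : (b <= a)%nat -> (/2) ^ a <= (/2) ^ b.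
Proof.
  intros H. replace a with (b + (a - b))%nat by lia. rewrite pow_add.
  pose proof (pow_half_pos b). pose proof (pow_le1 (/2) (a - b) ltac:(lra)). nra.
Qed.

Lemma INR_pow2 l : INR (2 ^ l) = 2 ^ l.
Proof. rewrite pow_INR. simpl. f_equal; ring. Qed.

Lemma NoDup_constant {A} (l : list A) x :
  NoDup l -> In x l -> (forall y, In y l -> y = x) -> l = x :: nil.
Proof.
  intros Hnd Hx Hall. destruct l as [|a [|b l]]; [contradiction| |].
  - now rewrite (Hall a (or_introl eq_refl)).
  - assert (a = x) by (apply Hall; now left). assert (b = x) by (apply Hall; right; now left).
    subst. inversion Hnd as [|? ? Hn]. destruct Hn. now left.
Qed.

Definition head_bit (w : word) : bool := match w with b :: _ => b | nil => false end.

Lemma kraft_bounded {A} L (l : list A) (f : A -> word) :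
  NoDup l -> (forall x, In x l -> (length (f x) <= L)%nat) ->
  (forall x y, In x l -> In y l -> x <> y -> ~ is_prefix (f x) (f y)) ->
  lsum l (fun x => (/2) ^ length (f x)) <= 1.
Proof.
  revert l f. induction L as [|L IH]; intros l f Hnd Hlen Hpf;
    (destruct (existsb (fun x => length (f x) =? 0)%nat l) eqn:Hnil;
     [ apply existsb_exists in Hnil as [x [Hx E]];
       apply Nat.eqb_eq, length_zero_iff_nil in E;
       rewrite (NoDup_constant l x Hnd Hx); [simpl; rewrite E; simpl; lra|];
       intros y Hy; apply NNPP; intros Hyx;
       apply (Hpf x y Hx Hy (not_eq_sym Hyx)); rewrite E; now exists (f y) |]).
  - destruct l as [|a l]; simpl; [lra|]. exfalso.
    specialize (Hlen a (or_introl eq_refl)). simpl in Hnil.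
    replace (length (f a) =? 0)%nat with true in Hnil by (symmetry; apply Nat.eqb_eq; lia).
    discriminate.
  - assert (Hne : forall x, In x l -> f x = head_bit (f x) :: tl (f x)).
    { intros x Hx. destruct (f x) eqn:E; [|reflexivity].
      assert (existsb (fun x => length (f x) =? 0)%nat l = true)
        by (apply existsb_exists; exists x; now rewrite E).
      congruence. }
    assert (Hhalf : forall b, lsum (filter (fun x => Bool.eqb b (head_bit (f x))) l)
                                   (fun x => (/2) ^ length (f x)) <= /2).
    { intros b. set (l' := filter _ l).
      assert (Hl' : forall x, In x l' -> In x l /\ head_bit (f x) = b)
        by (intros x Hx; apply filter_In in Hx as [Hx Hb]; now apply Bool.eqb_prop in Hb).
      rewrite (lsum_ext _ _ (fun x => /2 * (/2) ^ length (tl (f x)))), lsum_scal.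
      2:{ intros x Hx. rewrite (Hne x (proj1 (Hl' x Hx))) at 1. simpl. ring. }
      enough (lsum l' (fun x => (/2) ^ length (tl (f x))) <= 1) by lra.
      apply IH.
      - now apply NoDup_filter.
      - intros x Hx. specialize (Hlen x (proj1 (Hl' x Hx))).
        rewrite (Hne x (proj1 (Hl' x Hx))) in Hlen. simpl in Hlen. lia.
      - intros x y Hx Hy Hxy [w Hw]. destruct (Hl' x Hx) as [Hx' Bx], (Hl' y Hy) as [Hy' By].
        apply (Hpf x y Hx' Hy' Hxy). exists w.
        rewrite (Hne x Hx'), (Hne y Hy'), Hw, Bx, By. reflexivity. }
    rewrite (lsum_filter (fun x => head_bit (f x))).
    rewrite (filter_ext (fun x => head_bit (f x)) (fun x => Bool.eqb true (head_bit (f x))))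
      by (intros x; now destruct (head_bit (f x))).
    rewrite (filter_ext (fun x => negb (head_bit (f x))) (fun x => Bool.eqb false (head_bit (f x))))
      by (intros x; now destruct (head_bit (f x))).
    pose proof (Hhalf true). pose proof (Hhalf false). lra.
Qed.

Lemma kraft_inequality {A} (l : list A) (f : A -> word) :
  NoDup l -> (forall x y, In x l -> In y l -> x <> y -> ~ is_prefix (f x) (f y)) ->
  lsum l (fun x => (/2) ^ length (f x)) <= 1.
Proof.
  intros Hnd Hpf. apply (kraft_bounded (nsum l (fun x => length (f x)))); auto.
  intros x Hx. exact (nsum_ge_term l (fun x => length (f x)) x Hx).
Qed.

Fixpoint word_value (w : word) : R :=
  match w with nil => 0 | b :: w' => ((if b then 1 else 0) + word_value w') / 2 end.

Lemma word_value_bounds w : 0 <= word_value w /\ word_value w + (/2) ^ length w <= 1.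
Proof. induction w as [|b w IH]; simpl; [lra|]. destruct b; lra. Qed.

Lemma word_value_app u v : word_value (u ++ v) = word_value u + (/2) ^ length u * word_value v.
Proof. induction u as [|b u IH]; simpl; [ring|]. rewrite IH. field. Qed.

Lemma prefix_word_value u v :
  is_prefix u v -> word_value u <= word_value v < word_value u + (/2) ^ length u.
Proof.
  intros [r ->]. rewrite word_value_app. destruct (word_value_bounds r).
  pose proof (pow_half_pos (length u)). pose proof (pow_half_pos (length r)). split; nra.
Qed.

Fixpoint binary (l n : nat) : word :=
  match l with
  | O => nil
  | S l' => (2 ^ l' <=? n)%nat :: binary l' (if (2 ^ l' <=? n)%nat then n - 2 ^ l' else n)
  end.

Lemma binary_length l n : length (binary l n) = l.
Proof. revert n; induction l; simpl; auto. Qed.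

Lemma binary_value l n : (n < 2 ^ l)%nat -> word_value (binary l n) = INR n / 2 ^ l.
Proof.
  revert n. induction l as [|l IH]; intros n Hn; simpl.
  - simpl in Hn. replace n with 0%nat by lia. simpl. field.
  - pose proof (pow_lt 2 l ltac:(lra)). simpl in Hn.
    destruct (Nat.leb_spec (2 ^ l) n).
    + rewrite IH by lia. rewrite minus_INR, INR_pow2 by auto. field. lra.
    + rewrite IH by auto. field. lra.
Qed.

Section SortByLength.
Context {A : Type} (len : A -> nat).

Fixpoint insert_by (a : A) (l : list A) : list A :=
  match l with
  | nil => a :: nil
  | b :: l' => if (len a <=? len b)%nat then a :: b :: l' else b :: insert_by a l'
  end.

Fixpoint sort_by (l : list A) : list A :=
  match l with nil => nil | a :: l' => insert_by a (sort_by l') end.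

Lemma insert_by_perm a l : Permutation (insert_by a l) (a :: l).
Proof.
  induction l as [|b l IH]; simpl; auto. destruct (len a <=? len b)%nat; auto.
  eapply perm_trans; [apply perm_skip, IH|apply perm_swap].
Qed.

Lemma sort_by_perm l : Permutation (sort_by l) l.
Proof. induction l; simpl; auto. eapply perm_trans; [apply insert_by_perm|auto]. Qed.

Lemma insert_by_sorted a l :
  StronglySorted (fun x y => len x <= len y)%nat l ->
  StronglySorted (fun x y => len x <= len y)%nat (insert_by a l).
Proof.
  induction l as [|b l IH]; simpl; intros H.
  - repeat constructor.
  - apply StronglySorted_inv in H as [Hl Hb]. destruct (Nat.leb_spec (len a) (len b)).
    + constructor; [now constructor|]. constructor; [lia|].
      eapply Forall_impl; [|exact Hb]. simpl; lia.
    + constructor; auto. apply Forall_forall. intros x Hx.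
      apply (Permutation_in _ (insert_by_perm a l)) in Hx as [<-|Hx]; [lia|].
      now apply (proj1 (Forall_forall _ _) Hb).
Qed.

Lemma sort_by_sorted l : StronglySorted (fun x y => len x <= len y)%nat (sort_by l).
Proof. induction l; simpl; [constructor|]. now apply insert_by_sorted. Qed.

End SortByLength.

(* Shortest first, codeword a is the binary expansion of the running Kraft sum s; the
   sortedness keeps s a multiple of 2^-len a. *)
Lemma kraft_converse_sorted {A} (eqd : forall x y : A, {x = y} + {x <> y}) (len : A -> nat) :
  forall (l : list A) (s : R),
  NoDup l -> StronglySorted (fun x y => len x <= len y)%nat l -> 0 <= s ->
  (forall a, In a l -> exists n, s * 2 ^ len a = INR n) ->
  s + lsum l (fun a => (/2) ^ len a) <= 1 ->
  exists f : A -> word,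
    (forall a, In a l -> length (f a) = len a /\ s <= word_value (f a)) /\
    (forall a b, In a l -> In b l -> a <> b -> ~ is_prefix (f a) (f b)).
Proof.
  induction l as [|a l IH]; intros s Hnd Hsort Hs Hint Hk.
  { exists (fun _ => nil). split; intros; contradiction. }
  simpl in Hk. apply StronglySorted_inv in Hsort as [Hsort Hmin].
  inversion Hnd as [|? ? Hna Hnd']; subst.
  destruct (Hint a (or_introl eq_refl)) as [n0 Hn0].
  pose proof (pow_lt 2 (len a) ltac:(lra)). pose proof (pow2_half (len a)).
  pose proof (pow_half_pos (len a)).
  assert (0 <= lsum l (fun a => (/2) ^ len a))
    by (apply lsum_nonneg; intros; apply pow_le; lra).
  destruct (IH (s + (/2) ^ len a)) as [f [Hf1 Hf2]]; auto; [lra| |lra|].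
  { intros b Hb. pose proof (proj1 (Forall_forall _ _) Hmin b Hb) as Hab. simpl in Hab.
    exists ((n0 + 1) * 2 ^ (len b - len a))%nat.
    rewrite mult_INR, plus_INR, INR_pow2, <- Hn0.
    replace (len b) with (len a + (len b - len a))%nat at 1 by lia. rewrite pow_add.
    transitivity ((s * 2 ^ len a + 2 ^ len a * (/2) ^ len a) * 2 ^ (len b - len a)); [ring|].
    rewrite pow2_half. simpl. ring. }
  assert (Hn0k : (n0 < 2 ^ len a)%nat).
  { apply INR_lt. rewrite INR_pow2, <- Hn0. nra. }
  set (wa := binary (len a) n0).
  assert (Hwa : word_value wa = s) by (unfold wa; rewrite binary_value, <- Hn0 by auto; field; lra).
  assert (Hlwa : length wa = len a) by apply binary_length.
  exists (fun x => if eqd x a then wa else f x). split.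
  - intros x [<-|Hx].
    + destruct (eqd a a); [|congruence]. split; [exact Hlwa|lra].
    + destruct (eqd x a) as [->|]; [contradiction|]. destruct (Hf1 x Hx). split; auto. lra.
  - intros x y Hx Hy Hxy Hp.
    destruct (eqd x a) as [->|Hxa], (eqd y a) as [->|Hya]; try congruence.
    + destruct Hy as [E|Hy]; [congruence|]. destruct (Hf1 y Hy).
      apply prefix_word_value in Hp. rewrite Hwa, Hlwa in Hp. lra.
    + destruct Hx as [E|Hx]; [congruence|]. destruct (Hf1 x Hx).
      apply prefix_word_value in Hp. rewrite Hwa in Hp. lra.
    + destruct Hx as [E|Hx]; [congruence|]. destruct Hy as [E|Hy]; [congruence|].
      now apply (Hf2 x y).
Qed.

Lemma kraft_converse {A} (eqd : forall x y : A, {x = y} + {x <> y}) (len : A -> nat) (l : list A) :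
  NoDup l -> lsum l (fun a => (/2) ^ len a) <= 1 ->
  exists f : A -> word, (forall a, In a l -> length (f a) = len a) /\
    (forall a b, In a l -> In b l -> a <> b -> ~ is_prefix (f a) (f b)).
Proof.
  intros Hnd Hk. pose proof (sort_by_perm len l) as Hp.
  assert (Hin : forall a, In a l -> In a (sort_by len l))
    by (intros a Ha; apply Permutation_in with l; auto; now apply Permutation_sym).
  destruct (kraft_converse_sorted eqd len (sort_by len l) 0) as [f [Hf1 Hf2]].
  - apply Permutation_NoDup with l; auto. now apply Permutation_sym.
  - apply sort_by_sorted.
  - lra.
  - intros; exists 0%nat; simpl; ring.
  - rewrite (lsum_perm _ _ _ Hp). lra.
  - exists f. split; [intros a Ha; now apply Hf1, Hin|].
    intros a b Ha Hb. apply Hf2; auto.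
Qed.

(** * Complete dual-feasible lengths on the square *)

Local Open Scope nat_scope.
Local Open Scope bool_scope.

Lemma nsum_ext {A} (l : list A) f g : (forall x, In x l -> f x = g x) -> nsum l f = nsum l g.
Proof. induction l as [|a l IH]; simpl; intros H; [|rewrite H, IH]; auto. Qed.

Lemma nsum_filter {A} (p : A -> bool) l f :
  nsum l f = nsum (filter p l) f + nsum (filter (fun x => negb (p x)) l) f.
Proof. induction l as [|a l IH]; simpl; auto. destruct (p a); simpl; rewrite IH; lia. Qed.

Lemma nsum_le_const {A} (l : list A) f c :
  (forall x, In x l -> f x <= c) -> nsum l f <= length l * c.
Proof.
  induction l as [|a l IH]; simpl; intros H; auto.
  specialize (H a (or_introl eq_refl)) as Ha. specialize (IH (fun x Hx => H x (or_intror Hx))). lia.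
Qed.

Lemma nsum_const {A} (l : list A) f c : (forall x, In x l -> f x = c) -> nsum l f = length l * c.
Proof. induction l as [|a l IH]; simpl; intros H; [reflexivity|]. rewrite H, IH; auto. Qed.

Lemma nsum_divide {A} (l : list A) f u :
  (forall x, In x l -> Nat.divide u (f x)) -> Nat.divide u (nsum l f).
Proof.
  induction l as [|a l IH]; simpl; intros H; [apply Nat.divide_0_r|].
  apply Nat.divide_add_r; auto.
Qed.

Lemma nsum_update {A} (l : list A) f g p :
  NoDup l -> In p l -> (forall x, In x l -> x <> p -> f x = g x) ->
  nsum l f + g p = nsum l g + f p.
Proof.
  induction l as [|a l IH]; simpl; intros Hnd Hp H; [contradiction|].
  inversion Hnd as [|? ? Ha Hl]; subst. destruct Hp as [<-|Hp].
  - rewrite (nsum_ext l f g); [lia|]. intros x Hx; apply H; auto. intros ->; contradiction.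
  - rewrite H by (auto; intros ->; contradiction).
    enough (nsum l f + g p = nsum l g + f p) by lia. apply IH; auto.
Qed.

Lemma filter_length_unique {A} (g : A -> bool) l x0 :
  NoDup l -> In x0 l -> (forall x, In x l -> g x = true <-> x = x0) -> length (filter g l) = 1.
Proof.
  intros Hnd Hx H. rewrite (NoDup_constant (filter g l) x0); auto.
  - now apply NoDup_filter.
  - apply filter_In. split; auto. now apply H.
  - intros x Hx'. apply filter_In in Hx' as [Hx' Hg]. now apply H.
Qed.

Lemma filter_length_andb {A} (f g : A -> bool) l :
  length (filter f l) =
  length (filter (fun x => f x && g x) l) + length (filter (fun x => f x && negb (g x)) l).
Proof. induction l as [|a l IH]; simpl; auto. destruct (f a), (g a); simpl; lia. Qed.

Lemma filter_length_none {A} (g : A -> bool) l :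
  (forall x, In x l -> g x = false) -> length (filter g l) = 0.
Proof. intros H. now rewrite (filter_ext_in _ (fun _ => false)), filter_false. Qed.

Lemma div_between n Q d : Q * d <= n < Q * (d + 1) -> n / Q = d.
Proof. intros H. symmetry. apply (Nat.div_unique n Q d (n - Q * d)); lia. Qed.

Lemma mul_add_unique K x y x' y' : y < K -> y' < K -> x * K + y = x' * K + y' -> x = x' /\ y = y'.
Proof.
  intros Hy Hy' Eq. destruct (Nat.lt_trichotomy x x') as [C|[C|C]]; [nia|subst; lia|nia].
Qed.

Lemma pow2_divide a b : a <= b -> Nat.divide (2 ^ a) (2 ^ b).
Proof. intros H. exists (2 ^ (b - a)). rewrite <- Nat.pow_add_r. f_equal. lia. Qed.

Lemma mul_add_le_lex K x y x' y' :
  y < K -> y' < K -> x * K + y <= x' * K + y' <-> x < x' \/ (x = x' /\ y <= y').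
Proof.
  intros Hy Hy'. split.
  - intros H. destruct (Nat.lt_trichotomy x x') as [C|[C|C]]; [now left|subst; right; lia|nia].
  - intros [C|[-> C]]; [nia|lia].
Qed.

Lemma nat_ivt (W : nat -> nat) P N : P <= W 0 -> W N < P ->
  (forall t, t < N -> P <= W t -> P <= W (S t) \/ W t = P) -> exists t, t <= N /\ W t = P.
Proof.
  intros H0 HN Hs.
  assert (Hreach : forall t, t <= N -> (exists t', t' <= N /\ W t' = P) \/ P <= W t).
  { induction t as [|t IH]; intros Ht; [now right|].
    destruct (IH ltac:(lia)) as [Ex|Le]; [now left|].
    destruct (Hs t ltac:(lia) Le); [now right|left; exists t; split; auto; lia]. }
  destruct (Hreach N (le_n N)) as [Ex|Le]; auto. lia.
Qed.

(* At time t the symbol p = (a, b) has length (t + phase p) / period, where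
   period = k (2k+1) and phase p = (a + b)(2k+1) + rank p with rank p < 2k+1.  So k times the
   length tracks ceil(t / (2k+1)) + a + b (len_at_feasible), no two symbols are lengthened at
   the same time (jump_unique), and the ranks order the symbols of the diagonals a + b = s and
   s + k so that every drop of the scaled Kraft sum divides it (scaled_kraft_divide). *)
Section CompleteFeasibleLengths.

Variable k : nat.
Hypothesis hk : 1 <= k.

Definition diag (p : nat * nat) := fst p + snd p.
Definition nranks := 2 * k + 1.
Definition period := k * nranks.

Definition count_far (s : nat) := length (filter (fun p => s + k <=? diag p) (square k)).

Definition designated (p : nat * nat) : bool :=
  (k <=? diag p) && Nat.odd (count_far (diag p - k)) && (fst p =? diag p - k + 1).

Definition rank (p : nat * nat) :=
  if diag p <? k then 1 + fst p else if designated p then 0 else k + 1 + fst p.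

Definition phase p := diag p * nranks + rank p.
Definition len_at (t : nat) p := (t + phase p) / period.
Definition jumps (t : nat) p := (t + phase p + 1) mod period = 0.

Definition len_cap := k * k + 2.
Definition scaled_kraft t := nsum (square k) (fun p => 2 ^ (len_cap - len_at t p)).

Lemma period_neq0 : period <> 0.
Proof. unfold period, nranks. nia. Qed.

Lemma diag_le p : In p (square k) -> diag p <= 2 * k - 2.
Proof. destruct p as [a b]. rewrite in_square. unfold diag; simpl. lia. Qed.

Lemma designated_spec p :
  designated p = true <->
  k <= diag p /\ Nat.odd (count_far (diag p - k)) = true /\ fst p = diag p - k + 1.
Proof. unfold designated. now rewrite !Bool.andb_true_iff, Nat.leb_le, Nat.eqb_eq. Qed.

Lemma rank_cases p :
  (diag p < k /\ rank p = 1 + fst p) \/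
  (k <= diag p /\ designated p = true /\ rank p = 0) \/
  (k <= diag p /\ designated p = false /\ rank p = k + 1 + fst p).
Proof.
  unfold rank. destruct (Nat.ltb_spec (diag p) k); [now left|right].
  destruct (designated p); auto.
Qed.

Lemma rank_lt p : In p (square k) -> rank p < nranks.
Proof.
  destruct p as [a b]. intros Hp. apply in_square in Hp. unfold nranks.
  destruct (rank_cases (a, b)) as [[_ ->]|[[_ [_ ->]]|[_ [_ ->]]]]; simpl; lia.
Qed.

Lemma phase_lt p : In p (square k) -> phase p < 2 * period.
Proof.
  intros Hp. pose proof (diag_le p Hp). pose proof (rank_lt p Hp).
  unfold phase, period, nranks in *. nia.
Qed.

Lemma phase_inj p p' : In p (square k) -> In p' (square k) -> phase p = phase p' -> p = p'.
Proof.
  intros Hp Hp' Eq.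
  destruct (mul_add_unique nranks _ _ _ _ (rank_lt p Hp) (rank_lt p' Hp') Eq) as [Ed Er].
  destruct p as [a b], p' as [a' b'].
  destruct (rank_cases (a, b)) as [[H1 E1]|[[H1 [D1 E1]]|[H1 [D1 E1]]]];
  destruct (rank_cases (a', b')) as [[H2 E2]|[[H2 [D2 E2]]|[H2 [D2 E2]]]];
  rewrite ?designated_spec in *; unfold diag in *; simpl in *; f_equal; lia.
Qed.

Lemma phase_no_shift p p' : In p (square k) -> In p' (square k) -> phase p' <> phase p + period.
Proof.
  intros Hp Hp' Eq. unfold phase, period in Eq.
  replace (diag p * nranks + rank p + k * nranks) with ((diag p + k) * nranks + rank p) in Eq
    by ring.
  destruct (mul_add_unique nranks _ _ _ _ (rank_lt p' Hp') (rank_lt p Hp) Eq) as [Ed Er].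
  pose proof (diag_le p' Hp'). destruct p as [a b]. apply in_square in Hp.
  destruct (rank_cases (a, b)) as [[H1 E1]|[[H1 _]|[H1 _]]];
  destruct (rank_cases p') as [[H2 E2]|[[H2 [_ E2]]|[H2 [_ E2]]]];
  unfold diag in *; simpl in *; lia.
Qed.

Lemma jump_unique t p p' : In p (square k) -> In p' (square k) -> jumps t p -> jumps t p' -> p = p'.
Proof.
  intros Hp Hp' J J'. apply Nat.Div0.div_exact in J, J'.
  pose proof (phase_lt p Hp). pose proof (phase_lt p' Hp'). pose proof (phase_no_shift p p' Hp Hp').
  pose proof (phase_no_shift p' p Hp' Hp).
  set (x := (t + phase p + 1) / period) in J. set (y := (t + phase p' + 1) / period) in J'.
  apply phase_inj; auto.
  destruct (Nat.lt_trichotomy x y) as [C|[C|C]]; [|subst; lia|].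
  - destruct (Nat.eq_dec y (x + 1)); [subst; nia|]. assert (x + 2 <= y) by lia. nia.
  - destruct (Nat.eq_dec x (y + 1)); [subst; nia|]. assert (y + 2 <= x) by lia. nia.
Qed.

Lemma jump_time t p : jumps t p -> t + phase p + 1 = period * (len_at t p + 1).
Proof.
  intros J. apply Nat.Div0.div_exact in J. pose proof period_neq0.
  unfold len_at. set (m := (t + phase p + 1) / period) in J.
  replace ((t + phase p) / period) with (m - 1); [destruct m; lia|].
  apply Nat.div_unique with (period - 1); [lia|]. destruct m; nia.
Qed.

Lemma len_at_succ_jump t p : jumps t p -> len_at (S t) p = len_at t p + 1.
Proof.
  intros J. pose proof (jump_time t p J). pose proof period_neq0. unfold len_at at 1.
  apply div_between. lia.
Qed.

Lemma len_at_succ_stay t p : ~ jumps t p -> len_at (S t) p = len_at t p.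
Proof.
  intros J. pose proof period_neq0. unfold len_at, jumps in *.
  pose proof (Nat.div_mod (t + phase p) period period_neq0).
  pose proof (Nat.mod_upper_bound (t + phase p) period period_neq0).
  apply div_between. split; [nia|].
  destruct (Nat.eq_dec ((t + phase p) mod period) (period - 1)) as [E1|E1]; [|nia].
  exfalso. apply J. replace (t + phase p + 1) with (((t + phase p) / period + 1) * period) by nia.
  apply Nat.Div0.mod_mul.
Qed.

Lemma len_at_le_jump t p p' :
  In p' (square k) -> jumps t p -> len_at t p' <= len_at t p + 2.
Proof.
  intros Hp' J. pose proof (jump_time t p J). pose proof (phase_lt p' Hp').
  apply Nat.lt_succ_r, Nat.Div0.div_lt_upper_bound. nia.
Qed.

Lemma len_at_le_jump_far t p p' :
  In p' (square k) -> k <= diag p -> jumps t p -> len_at t p' <= len_at t p + 1.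
Proof.
  intros Hp' Hd J. pose proof (jump_time t p J). pose proof (phase_lt p' Hp').
  assert (period <= phase p) by (unfold phase, period; nia).
  apply Nat.lt_succ_r, Nat.Div0.div_lt_upper_bound. nia.
Qed.

Lemma len_at_two_more t p p' : In p' (square k) -> jumps t p ->
  len_at t p' = len_at t p + 2 <-> phase p + period + 1 <= phase p'.
Proof.
  intros Hp' J. pose proof (jump_time t p J). pose proof (len_at_le_jump t p p' Hp' J).
  pose proof (Nat.Div0.mul_div_le (t + phase p') period).
  pose proof (Nat.mul_succ_div_gt (t + phase p') period period_neq0).
  unfold len_at in *. split; intros H'.
  - rewrite H' in *. nia.
  - enough (len_at t p + 2 <= len_at t p') by (unfold len_at in *; lia).
    apply Nat.div_le_lower_bound; [exact period_neq0|]. unfold len_at. nia.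
Qed.

Lemma count_far_odd s : Nat.odd (count_far s) = true -> s + 1 < k.
Proof.
  unfold count_far. destruct (filter _ (square k)) as [|p l] eqn:F; [discriminate|intros _].
  assert (Hin : In p (filter (fun p => s + k <=? diag p) (square k))) by (rewrite F; now left).
  apply filter_In in Hin as [Hin Hf]. apply Nat.leb_le in Hf. pose proof (diag_le p Hin). lia.
Qed.

Lemma designated_far s p :
  s < k -> In p (square k) ->
  (diag p = s + k /\ designated p = true <-> Nat.odd (count_far s) = true /\ p = (s + 1, k - 1)).
Proof.
  intros Hs Hp. destruct p as [a b]. apply in_square in Hp. rewrite designated_spec.
  unfold diag; simpl. split.
  - intros [Hd [_ [Ho Ha]]]. replace (a + b - k) with s in * by lia. split; auto. f_equal; lia.
  - intros [Ho Ep]. injection Ep as -> ->. pose proof (count_far_odd s Ho).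
    replace (s + 1 + (k - 1) - k) with s by lia. repeat split; auto; lia.
Qed.

Lemma phase_two_more_iff p p' : In p (square k) -> In p' (square k) -> diag p < k ->
  phase p + period + 1 <= phase p' <->
  diag p + k <= diag p' /\ ~ (diag p' = diag p + k /\ designated p' = true).
Proof.
  intros Hp Hp' Hs. pose proof (rank_lt p' Hp') as Hr'. pose proof (diag_le p' Hp') as Hd'.
  destruct p as [a b]. apply in_square in Hp.
  assert (Er : rank (a, b) = 1 + a) by (unfold rank; apply Nat.ltb_lt in Hs; now rewrite Hs).
  unfold phase, period. rewrite Er.
  replace (diag (a, b) * nranks + (1 + a) + k * nranks + 1)
    with ((diag (a, b) + k) * nranks + (a + 2)) by ring.
  rewrite mul_add_le_lex by (unfold nranks, diag in *; simpl in *; lia).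
  unfold diag in *; simpl in *.
  destruct (rank_cases p') as [[H1 E1]|[[H1 [D1 E1]]|[H1 [D1 E1]]]]; rewrite ?E1, ?D1;
    unfold diag in *; simpl in *.
  - lia.
  - split; [intros [C|[_ C]]; [split; [lia|intros [C' _]; lia]|lia]|].
    intros [C C']. left.
    destruct (Nat.eq_dec (fst p' + snd p') (a + b + k)); [|lia]. now destruct C'.
  - split; [intros C; split; [lia|intros [_ D]; discriminate]|]. intros [C _]. lia.
Qed.

(* When a codeword of length L on a short diagonal is lengthened, the codewords of length
   L + 2 come in pairs: the designated symbol removes one of them when their number would
   be odd. *)
Lemma two_longer_even t p : In p (square k) -> diag p < k -> jumps t p ->
  Nat.even (length (filter (fun p' => len_at t p' =? len_at t p + 2) (square k))) = true.
Proof.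
  intros Hp Hs J. set (s := diag p).
  set (far := fun p' => s + k <=? diag p').
  set (desig := fun p' => (diag p' =? s + k) && designated p').
  rewrite (filter_ext_in _ (fun p' => far p' && negb (desig p'))).
  2:{ intros p' Hp'. apply Bool.eq_iff_eq_true.
      rewrite Nat.eqb_eq, len_at_two_more, phase_two_more_iff by auto.
      unfold far, desig. rewrite Bool.andb_true_iff, Bool.negb_true_iff, Nat.leb_le.
      rewrite <- Bool.not_true_iff_false, Bool.andb_true_iff, Nat.eqb_eq. fold s. tauto. }
  assert (Hdesig : length (filter (fun p' => far p' && desig p') (square k)) =
                   if Nat.odd (count_far s) then 1 else 0).
  { destruct (Nat.odd (count_far s)) eqn:Ho.
    - apply filter_length_unique with (s + 1, k - 1); [apply NoDup_square| |].
      + apply in_square. pose proof (count_far_odd s Ho). lia.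
      + intros p' Hp'. pose proof (designated_far s p' Hs Hp') as D.
        unfold far, desig. rewrite !Bool.andb_true_iff, Nat.leb_le, Nat.eqb_eq. split.
        * intros [_ H]. now apply D.
        * intros Ep. destruct (proj2 D (conj Ho Ep)). repeat split; auto; lia.
    - apply filter_length_none. intros p' Hp'. unfold far, desig.
      destruct (diag p' =? s + k) eqn:E1, (designated p') eqn:E2; rewrite ?Bool.andb_false_r; auto.
      apply Nat.eqb_eq in E1.
      destruct (proj1 (designated_far s p' Hs Hp') (conj E1 E2)). congruence. }
  pose proof (filter_length_andb far desig (square k)) as Split.
  change (length (filter far (square k))) with (count_far s) in Split.
  rewrite Hdesig in Split.
  destruct (Nat.odd (count_far s)) eqn:Ho; rewrite Split in Ho; simpl in Ho.
  - now rewrite Nat.odd_succ in Ho.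
  - now rewrite <- Nat.negb_odd, Ho.
Qed.

Definition end_time := period * (k * k).

Lemma len_at_lt_cap t p : In p (square k) -> t <= end_time -> len_at t p < len_cap.
Proof.
  intros Hp Ht. pose proof (phase_lt p Hp). unfold len_at, len_cap, end_time in *.
  apply Nat.Div0.div_lt_upper_bound. nia.
Qed.

Lemma jump_len_lt_cap t p :
  In p (square k) -> t < end_time -> jumps t p -> len_at t p + 2 <= len_cap.
Proof.
  intros Hp Ht J. pose proof (jump_time t p J). pose proof (phase_lt p Hp).
  unfold len_cap, end_time in *.
  enough (len_at t p < k * k + 1) by lia. nia.
Qed.

(* Every term of the scaled Kraft sum, hence the sum itself, is a multiple of the amount by
   which it drops when p is lengthened. *)
Lemma scaled_kraft_divide t p : In p (square k) -> t < end_time -> jumps t p ->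
  Nat.divide (2 ^ (len_cap - (len_at t p + 1))) (scaled_kraft t).
Proof.
  intros Hp Ht J. pose proof (jump_len_lt_cap t p Hp Ht J). set (L := len_at t p) in *.
  assert (Hterm : forall p', len_at t p' <= L + 1 ->
            Nat.divide (2 ^ (len_cap - (L + 1))) (2 ^ (len_cap - len_at t p'))).
  { intros p' Hle. apply pow2_divide. lia. }
  unfold scaled_kraft. destruct (Nat.lt_ge_cases (diag p) k) as [Hs|Hs].
  - rewrite (nsum_filter (fun p' => len_at t p' =? L + 2)). apply Nat.divide_add_r.
    + rewrite (nsum_const _ _ (2 ^ (len_cap - (L + 2)))).
      2:{ intros x Hx. apply filter_In in Hx as [_ Hx]. apply Nat.eqb_eq in Hx. now rewrite Hx. }
      pose proof (two_longer_even t p Hp Hs J) as Ev. apply Nat.even_spec in Ev as [m Hm].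
      fold L in Hm. rewrite Hm. exists m.
      replace (len_cap - (L + 1)) with (S (len_cap - (L + 2))) by lia. simpl. lia.
    + apply nsum_divide. intros x Hx. apply filter_In in Hx as [Hx Hb].
      apply Bool.negb_true_iff, Nat.eqb_neq in Hb. apply Hterm.
      pose proof (len_at_le_jump t p x Hx J) as Hle. fold L in Hle. lia.
  - apply nsum_divide. intros x Hx. apply Hterm. exact (len_at_le_jump_far t p x Hx Hs J).
Qed.

Lemma scaled_kraft_step t : t < end_time -> 2 ^ len_cap <= scaled_kraft t ->
  2 ^ len_cap <= scaled_kraft (S t) \/ scaled_kraft t = 2 ^ len_cap.
Proof.
  intros Ht HW.
  destruct (existsb (fun p => (t + phase p + 1) mod period =? 0) (square k)) eqn:Hj.
  - apply existsb_exists in Hj as [p [Hp J]]. apply Nat.eqb_eq in J. fold (jumps t p) in J.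
    pose proof (jump_len_lt_cap t p Hp Ht J).
    assert (Hch : scaled_kraft (S t) + 2 ^ (len_cap - len_at t p) =
                  scaled_kraft t + 2 ^ (len_cap - len_at (S t) p)).
    { unfold scaled_kraft.
      apply (nsum_update _ (fun p => 2 ^ (len_cap - len_at (S t) p))
                           (fun p => 2 ^ (len_cap - len_at t p))); auto using NoDup_square.
      intros x Hx Hxp. rewrite len_at_succ_stay; auto. intros Jx. apply Hxp.
      now apply (jump_unique t x p). }
    rewrite len_at_succ_jump in Hch by auto.
    replace (len_cap - len_at t p) with (S (len_cap - (len_at t p + 1))) in Hch by lia.
    destruct (scaled_kraft_divide t p Hp Ht J) as [x Hx].
    destruct (pow2_divide (len_cap - (len_at t p + 1)) len_cap) as [y Hy]; [lia|].
    set (u := 2 ^ (len_cap - (len_at t p + 1))) in *. simpl in Hch.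
    assert (0 < u) by (apply Nat.neq_0_lt_0, Nat.pow_nonzero; lia).
    destruct (Nat.eq_dec (scaled_kraft t) (2 ^ len_cap)) as [Eq|Ne]; [now right|left].
    assert (y < x) by nia. nia.
  - left. replace (scaled_kraft (S t)) with (scaled_kraft t); auto. apply nsum_ext. intros x Hx.
    rewrite len_at_succ_stay; auto. intros Jx.
    assert (existsb (fun p => (t + phase p + 1) mod period =? 0) (square k) = true)
      by (apply existsb_exists; exists x; split; auto; now apply Nat.eqb_eq).
    congruence.
Qed.

Lemma scaled_kraft_start : 2 ^ len_cap <= scaled_kraft 0.
Proof.
  unfold scaled_kraft. eapply Nat.le_trans; [|apply (nsum_ge_term _ _ (0, 0))].
  - cbv beta. replace (len_at 0 (0, 0)) with 0; [rewrite Nat.sub_0_r; auto|].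
    unfold len_at, phase, rank, diag; simpl. destruct (Nat.ltb_spec 0 k); [|lia].
    symmetry. apply Nat.div_small. unfold period, nranks. nia.
  - apply in_square; lia.
Qed.

Lemma scaled_kraft_end : scaled_kraft end_time < 2 ^ len_cap.
Proof.
  unfold scaled_kraft. eapply Nat.le_lt_trans; [apply (nsum_le_const _ _ (2 ^ 2))|].
  - intros p Hp. apply Nat.pow_le_mono_r; [lia|].
    enough (k * k <= len_at end_time p) by (unfold len_cap; lia).
    apply Nat.div_le_lower_bound; [exact period_neq0|]. unfold end_time. lia.
  - unfold square. rewrite length_prod, length_seq. unfold len_cap. rewrite Nat.pow_add_r.
    pose proof (Nat.pow_gt_lin_r 2 (k * k) ltac:(lia)). simpl. lia.
Qed.

Lemma complete_time : exists t, t <= end_time /\ scaled_kraft t = 2 ^ len_cap.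
Proof.
  apply (nat_ivt scaled_kraft (2 ^ len_cap) end_time).
  - apply scaled_kraft_start.
  - apply scaled_kraft_end.
  - apply scaled_kraft_step.
Qed.

Lemma len_at_feasible t p : In p (square k) ->
  k * len_at t p <= (t + nranks - 1) / nranks + diag p <= k * len_at t p + k.
Proof.
  intros Hp. pose proof (rank_lt p Hp). assert (HK : nranks <> 0) by (unfold nranks; lia).
  pose proof (Nat.Div0.mul_div_le (t + phase p) period).
  pose proof (Nat.mul_succ_div_gt (t + phase p) period period_neq0).
  pose proof (Nat.Div0.mul_div_le (t + nranks - 1) nranks).
  pose proof (Nat.mul_succ_div_gt (t + nranks - 1) nranks HK).
  unfold len_at, phase, period in *.
  set (c := (t + nranks - 1) / nranks) in *. set (L := (t + _) / _) in *.
  split; nia.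
Qed.

End CompleteFeasibleLengths.

Local Close Scope bool_scope.
Local Close Scope nat_scope.

Lemma complete_feasible_lengths k : (1 <= k)%nat -> exists (ls : nat -> nat -> nat) (c : nat),
  sq_sum k (fun a b => (/2) ^ ls a b) = 1 /\
  forall a b, (a < k)%nat -> (b < k)%nat -> (k * ls a b <= c + (a + b) <= k * ls a b + k)%nat.
Proof.
  intros hk. destruct (complete_time k hk) as [t [Ht HW]].
  exists (fun a b => len_at k t (a, b)), ((t + nranks k - 1) / nranks k)%nat. split.
  - rewrite sq_sum_lsum.
    rewrite (lsum_ext _ _ (fun p => INR (2 ^ (len_cap k - len_at k t p)) * / 2 ^ len_cap k)).
    + rewrite lsum_scal_r, <- INR_nsum. fold (scaled_kraft k t). rewrite HW, INR_pow2.
      apply Rinv_r, pow_nonzero. lra.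
    + intros [a b] Hp. pose proof (len_at_lt_cap k hk t (a, b) Hp Ht). simpl.
      set (L := len_at k t (a, b)) in *. rewrite INR_pow2, pow_inv.
      replace (len_cap k) with (L + (len_cap k - L))%nat at 2 by lia. rewrite pow_add.
      field. split; apply pow_nonzero; lra.
  - intros a b Ha Hb. apply (len_at_feasible k hk t (a, b)). now apply in_square.
Qed.

(** * Optimality of the composed code *)

Definition composed_code (k : nat) (T : nat -> nat -> word) (i j : nat) : word :=
  T (i mod k)%nat (j mod k)%nat ++ unary (i / k)%nat ++ unary (j / k)%nat.

Lemma app_prefix_cases (u r u' r' : word) :
  u ++ r = u' ++ r' -> is_prefix u u' \/ is_prefix u' u.
Proof.
  revert u'. induction u as [|b u IH]; intros u' Eq; [left; now exists u'|].
  destruct u' as [|b' u']; [right; now exists (b :: u)|].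
  simpl in Eq. injection Eq as -> Eq.
  destruct (IH u' Eq) as [[w ->]|[w ->]]; [left|right]; now exists w.
Qed.

Lemma unary_app_inj x x' r r' : unary x ++ r = unary x' ++ r' -> x = x' /\ r = r'.
Proof.
  unfold unary. rewrite <- !app_assoc. simpl. revert x'.
  induction x as [|x IH]; intros [|x'] Eq; simpl in Eq; try discriminate.
  - now injection Eq.
  - injection Eq as Eq. destruct (IH x' Eq). auto.
Qed.

Lemma unary_length x : length (unary x) = S x.
Proof. unfold unary. rewrite length_app, repeat_length. simpl. lia. Qed.

Lemma composed_prefix_code k T :
  (1 <= k)%nat -> prefix_code_fin k T -> prefix_code (composed_code k T).
Proof.
  intros hk HT i j i' j' Hne [w Hw]. unfold composed_code in Hw. rewrite <- !app_assoc in Hw.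
  assert (Hk : k <> 0%nat) by lia.
  pose proof (Nat.mod_upper_bound i k Hk). pose proof (Nat.mod_upper_bound j k Hk).
  pose proof (Nat.mod_upper_bound i' k Hk). pose proof (Nat.mod_upper_bound j' k Hk).
  destruct (Nat.eq_dec (i mod k) (i' mod k)) as [Ea|Ea],
           (Nat.eq_dec (j mod k) (j' mod k)) as [Eb|Eb].
  1:{ rewrite Ea, Eb in Hw. apply app_inv_head in Hw. symmetry in Hw.
      apply unary_app_inj in Hw as [Ex Hw].
      rewrite <- (app_nil_r (unary (j' / k))) in Hw. symmetry in Hw.
      apply unary_app_inj in Hw as [Ey _]. apply Hne.
      rewrite (Nat.div_mod i k), (Nat.div_mod i' k), (Nat.div_mod j k), (Nat.div_mod j' k) by auto.
      now rewrite Ea, Eb, Ex, Ey. }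
  all: assert (Hm : (i mod k, j mod k)%nat <> (i' mod k, j' mod k)%nat)
         by (intros Eq; injection Eq; tauto).
  all: destruct (app_prefix_cases _ _ _ _ Hw) as [P|P];
    [ apply (HT (i' mod k)%nat (j' mod k)%nat (i mod k)%nat (j mod k)%nat)
    | apply (HT (i mod k)%nat (j mod k)%nat (i' mod k)%nat (j' mod k)%nat) ]; auto.
Qed.

Lemma optimal_fin_le_lengths k q T ls :
  optimal_fin k q T -> sq_sum k (fun a b => (/2) ^ ls a b) <= 1 ->
  sq_sum k (fun a b => q ^ (a + b) * INR (length (T a b))) <=
  sq_sum k (fun a b => q ^ (a + b) * INR (ls a b)).
Proof.
  intros [_ Hopt] Hk.
  assert (eqd : forall x y : nat * nat, {x = y} + {x <> y}) by (decide equality; apply Nat.eq_dec).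
  destruct (kraft_converse eqd (fun p => ls (fst p) (snd p)) (square k) (NoDup_square k))
    as [f [Hlen Hpf]]; [now rewrite sq_sum_lsum in Hk|].
  replace (sq_sum k (fun a b => q ^ (a + b) * INR (ls a b)))
    with (sq_cost k (fun a b => q ^ (a + b)) (fun a b => f (a, b))).
  - apply Hopt. intros a b a' b' Ha Hb Ha' Hb' Hne. apply Hpf; auto; now apply in_square.
  - apply sq_sum_ext. intros a b Ha Hb. rewrite (Hlen (a, b)); [reflexivity|now apply in_square].
Qed.

(* The map n |-> w n + mu 2^-n decreases up to ns and increases from ns on. *)
Lemma lagrange_pointwise w mu ns n :
  0 < w -> 2 ^ ns * w <= mu <= 2 ^ (ns + 1) * w ->
  w * INR ns + mu * (/2) ^ ns <= w * INR n + mu * (/2) ^ n.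
Proof.
  intros Hw [H1 H2].
  pose proof (pow2_half ns). pose proof (pow_half_pos ns).
  pose proof (pow2_half (ns + 1)). pose proof (pow_half_pos (ns + 1)).
  assert (Hhi : mu * (/2) ^ (ns + 1) <= w) by nra.
  assert (Hlo : w <= mu * (/2) ^ ns) by nra.
  assert (Hmu : 0 <= mu) by (pose proof (pow_lt 2 ns); nra).
  set (f m := w * INR m + mu * (/2) ^ m).
  assert (Hstep : forall m, f (S m) = f m + w - mu * (/2) ^ S m)
    by (intros m; unfold f; rewrite S_INR; simpl; field).
  change (f ns <= f n). destruct (Nat.le_gt_cases ns n) as [Hn|Hn].
  - induction Hn as [|n Hn IH]; [lra|]. rewrite Hstep.
    enough (mu * (/2) ^ S n <= mu * (/2) ^ (ns + 1)) by lra.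
    apply Rmult_le_compat_l; [lra|apply pow_half_anti; lia].
  - assert (Hdown : forall d, (d <= ns)%nat -> f ns <= f (ns - d)%nat).
    { induction d as [|d IH]; intros Hd; [rewrite Nat.sub_0_r; lra|].
      specialize (IH ltac:(lia)). replace (ns - d)%nat with (S (ns - S d)) in IH by lia.
      rewrite Hstep in IH.
      enough (mu * (/2) ^ ns <= mu * (/2) ^ S (ns - S d)) by lra.
      apply Rmult_le_compat_l; [lra|apply pow_half_anti; lia]. }
    replace n with (ns - (ns - n))%nat by lia. apply Hdown; lia.
Qed.

Section ComposedCode.

Variable k : nat.
Hypothesis hk : (1 <= k)%nat.
Variable q : R.
Hypothesis q_pos : 0 < q.
Hypothesis q_pow_k : q ^ k = / 2.
Variable T : nat -> nat -> word.
Hypothesis T_opt : optimal_fin k q T.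

Let w (i j : nat) := q ^ (i + j).
Let C := composed_code k T.

Lemma q_le_1 : q <= 1.
Proof.
  destruct (Rle_lt_dec q 1) as [H|H]; auto.
  pose proof (Rlt_pow_R1 q k H ltac:(lia)). lra.
Qed.

Lemma q_ge_half : / 2 <= q.
Proof.
  rewrite <- q_pow_k. replace k with (S (k - 1)) at 1 by lia. simpl.
  pose proof (pow_le1 q (k - 1) (conj (Rlt_le _ _ q_pos) q_le_1)). nra.
Qed.

Lemma composed_cost_grow n m : (n < m)%nat -> sq_cost n w C + 2 * (/2) ^ n <= sq_cost m w C.
Proof.
  intros Hnm. eapply Rle_trans;
    [|apply (sq_sum_grow n m (fun i j => w i j * INR (length (C i j)))); auto].
  - apply Rplus_le_compat_l. unfold w, C, composed_code.
    rewrite Nat.add_0_r, !length_app, !unary_length, !plus_INR, !S_INR.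
    pose proof (pos_INR (length (T (n mod k)%nat (0 mod k)%nat))). pose proof (pos_INR (n / k)).
    pose proof (pos_INR (0 / k)). pose proof (pow_incr (/2) q n ltac:(pose proof q_ge_half; lra)).
    pose proof (pow_half_pos n). nra.
  - intros. unfold w. apply Rmult_le_pos; [apply pow_le; lra|apply pos_INR].
Qed.

Lemma mod_div_block a x : (a < k)%nat -> ((a + k * x) mod k = a /\ (a + k * x) / k = x)%nat.
Proof.
  intros Ha. rewrite (Nat.mul_comm k x). split.
  - rewrite Nat.Div0.mod_add. now apply Nat.mod_small.
  - rewrite Nat.div_add, Nat.div_small by lia. lia.
Qed.

Section Certificate.

Variable ls : nat -> nat -> nat.
Variable c : nat.
Hypothesis ls_kraft : sq_sum k (fun a b => (/2) ^ ls a b) = 1.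
Hypothesis ls_feasible : forall a b, (a < k)%nat -> (b < k)%nat ->
  (k * ls a b <= c + (a + b) <= k * ls a b + k)%nat.

Let r := / q.
Let mu := r ^ (c + 2 * k).
Let ns (i j : nat) := (ls (i mod k) (j mod k) + i / k + j / k + 2)%nat.

Lemma r_ge_1 : 1 <= r.
Proof. unfold r. rewrite <- Rinv_1. apply Rinv_le_contravar; [lra|apply q_le_1]. Qed.

Lemma qr_pow e : q ^ e * r ^ e = 1.
Proof. unfold r. rewrite <- Rpow_mult_distr, Rinv_r, pow1; lra. Qed.

Lemma r_pow_k : r ^ k = 2.
Proof. unfold r. rewrite pow_inv, q_pow_k. field. Qed.

Lemma two_pow_r n : 2 ^ n = r ^ (k * n).
Proof. now rewrite pow_mult, r_pow_k. Qed.

(* With i = a + k x and j = b + k y, the quantity 2^(ns i j) q^(i+j) equals r^(k ls + 2k) q^(a+b),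
   so the feasibility of ls is exactly the Lagrange condition for the multiplier mu. *)
Lemma ns_lagrange_window i j :
  2 ^ ns i j * w i j <= mu <= 2 ^ (ns i j + 1) * w i j.
Proof.
  assert (Hk : k <> 0%nat) by lia.
  set (a := (i mod k)%nat). set (b := (j mod k)%nat).
  destruct (ls_feasible a b) as [F1 F2]; try apply Nat.mod_upper_bound; auto.
  assert (Hkey : 2 ^ ns i j * w i j * r ^ (a + b) = r ^ (k * ls a b + 2 * k)).
  { unfold w, ns. fold a b. rewrite two_pow_r.
    replace (i + j)%nat with ((a + b) + (k * (i / k) + k * (j / k)))%nat
      by (pose proof (Nat.div_mod i k Hk); pose proof (Nat.div_mod j k Hk); unfold a, b; lia).
    replace (k * (ls a b + i / k + j / k + 2))%nat
      with ((k * ls a b + 2 * k) + (k * (i / k) + k * (j / k)))%nat by ring.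
    set (A := (k * ls a b + 2 * k)%nat). set (S := (a + b)%nat).
    set (X := (k * (i / k) + k * (j / k))%nat). rewrite !pow_add.
    transitivity (r ^ A * (q ^ S * r ^ S) * (q ^ X * r ^ X)); [ring|]. rewrite !qr_pow. ring. }
  assert (Hmu : mu * r ^ (a + b) = r ^ (c + (a + b) + 2 * k))
    by (unfold mu; rewrite <- pow_add; f_equal; lia).
  pose proof r_ge_1. assert (Hr : 0 < r ^ (a + b)) by (apply pow_lt; lra).
  split.
  - apply (Rmult_le_reg_r (r ^ (a + b))); auto. rewrite Hkey, Hmu. apply Rle_pow; [lra|lia].
  - apply (Rmult_le_reg_r (r ^ (a + b))); auto. rewrite Hmu, (pow_add 2 (ns i j) 1), pow_1.
    replace (2 ^ ns i j * 2 * w i j * r ^ (a + b))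
      with (2 * (2 ^ ns i j * w i j * r ^ (a + b))) by ring.
    rewrite Hkey, <- r_pow_k at 1. rewrite <- pow_add. apply Rle_pow; [lra|lia].
Qed.

Lemma lagrange_bound D m : prefix_code D ->
  sq_sum m (fun i j => w i j * INR (ns i j)) + mu * sq_sum m (fun i j => (/2) ^ ns i j) <=
  sq_cost m w D + mu.
Proof.
  intros HD.
  assert (HkD : sq_sum m (fun i j => (/2) ^ length (D i j)) <= 1).
  { rewrite sq_sum_lsum. apply (kraft_inequality _ (fun p => D (fst p) (snd p)) (NoDup_square m)).
    intros [i j] [i' j'] _ _ Hne. now apply HD. }
  assert (Hmu : 0 <= mu) by (apply pow_le; pose proof r_ge_1; lra).
  apply Rle_trans with (sq_cost m w D + mu * sq_sum m (fun i j => (/2) ^ length (D i j))); [|nra].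
  unfold sq_cost. fold (sq_sum m (fun i j => w i j * INR (length (D i j)))).
  rewrite <- !sq_sum_scal, <- !sq_sum_plus. apply sq_sum_le. intros i j _ _.
  apply lagrange_pointwise; [unfold w; apply pow_lt; lra|apply ns_lagrange_window].
Qed.

Lemma kraft_ns M : sq_sum (k * M) (fun i j => (/2) ^ ns i j) = (1 - (/2) ^ M) ^ 2.
Proof.
  rewrite (sq_sum_geom_blocks k M _ (fun a b => (/2) ^ ls a b * / 4)).
  - rewrite sq_sum_scal_r, ls_kraft. field.
  - intros a b x y Ha Hb _ _. unfold ns.
    destruct (mod_div_block a x Ha) as [-> ->], (mod_div_block b y Hb) as [-> ->].
    rewrite !pow_add. simpl. field.
Qed.

Lemma composed_le_ns M :
  sq_cost (k * M) w C <= sq_sum (k * M) (fun i j => w i j * INR (ns i j)).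
Proof.
  unfold sq_cost. fold (sq_sum (k * M) (fun i j => w i j * INR (length (C i j)))).
  replace (sq_sum _ (fun i j => w i j * INR (ns i j))) with
    (sq_sum (k * M) (fun i j => w i j * INR (length (C i j))) +
     sq_sum (k * M) (fun i j => w i j * (INR (ns i j) - INR (length (C i j)))))
    by (rewrite <- sq_sum_plus; apply sq_sum_ext; intros; ring).
  enough (0 <= sq_sum (k * M) (fun i j => w i j * (INR (ns i j) - INR (length (C i j))))) by lra.
  rewrite (sq_sum_geom_blocks k M _
    (fun a b => q ^ (a + b) * (INR (ls a b) - INR (length (T a b))))).
  - apply Rmult_le_pos; [apply pow2_ge_0|].
    pose proof (optimal_fin_le_lengths k q T ls T_opt ltac:(lra)) as Hopt.
    replace (sq_sum k (fun a b => q ^ (a + b) * INR (ls a b))) with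
      (sq_sum k (fun a b => q ^ (a + b) * INR (length (T a b))) +
       sq_sum k (fun a b => q ^ (a + b) * (INR (ls a b) - INR (length (T a b))))) in Hopt
      by (rewrite <- sq_sum_plus; apply sq_sum_ext; intros; ring).
    lra.
  - intros a b x y Ha Hb _ _. unfold w, ns, C, composed_code.
    destruct (mod_div_block a x Ha) as [-> ->], (mod_div_block b y Hb) as [-> ->].
    rewrite !length_app, !unary_length, !plus_INR, !S_INR.
    replace (a + k * x + (b + k * y))%nat with (a + b + k * x + k * y)%nat by lia.
    rewrite !pow_add, !pow_mult, q_pow_k. simpl. ring.
Qed.

Lemma composed_cost_le_certified D n : prefix_code D -> exists m, sq_cost n w C <= sq_cost m w D.
Proof.
  (* On the square of side k M, the slack mu 2^-M left by the Lagrangian bound is paid for by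
     the codeword of (n, 0), which lies outside the square of side n. *)
  intros HD. set (M := (n + 1 + (c + 2 * k))%nat). exists (k * M)%nat.
  pose proof (composed_cost_grow n (k * M) ltac:(unfold M; nia)) as Hgrow.
  pose proof (composed_le_ns M) as Hns.
  pose proof (lagrange_bound D (k * M) HD) as Hlag. rewrite kraft_ns in Hlag.
  assert (Hmu : 0 <= mu) by (apply pow_le; pose proof r_ge_1; lra).
  assert (Hh : 0 <= (/2) ^ M <= 1) by (split; [apply pow_le|apply pow_le1]; lra).
  assert (Hsmall : mu * (/2) ^ M <= / 2 * (/2) ^ n).
  { unfold M. rewrite (pow_add (/2) (n + 1)), (pow_add (/2) n 1), pow_1.
    assert (mu <= 2 ^ (c + 2 * k)) by (apply pow_incr; pose proof r_ge_1; split; [lra|];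
      unfold r; rewrite <- (Rinv_inv 2); apply Rinv_le_contravar; [lra|apply q_ge_half]).
    pose proof (pow2_half (c + 2 * k)). pose proof (pow_half_pos n).
    pose proof (pow_half_pos (c + 2 * k)).
    assert (mu * (/2) ^ (c + 2 * k) <= 1) by nra.
    replace (mu * ((/2) ^ n * / 2 * (/2) ^ (c + 2 * k)))
      with (mu * (/2) ^ (c + 2 * k) * (/ 2 * (/2) ^ n)) by ring.
    apply Rle_trans with (1 * (/ 2 * (/2) ^ n)); [apply Rmult_le_compat_r|]; lra. }
  assert (mu - 2 * (mu * (/2) ^ M) <= mu * (1 - (/2) ^ M) ^ 2)
    by (pose proof (Rmult_le_pos _ _ Hmu (pow2_ge_0 ((/2) ^ M))); nra).
  pose proof (pow_half_pos n). lra.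
Qed.

End Certificate.

Lemma composed_cost_le D n : prefix_code D -> exists m, sq_cost n w C <= sq_cost m w D.
Proof.
  destruct (complete_feasible_lengths k hk) as [ls [c [Hkraft Hfeas]]].
  exact (composed_cost_le_certified ls c Hkraft Hfeas D n).
Qed.

End ComposedCode.

Lemma qk_pow_k k : (1 <= k)%nat -> qk k ^ k = / 2.
Proof.
  intros Hk. unfold qk. rewrite <- Rpower_pow, Rpower_mult by (unfold Rpower; apply exp_pos).
  replace (- / INR k * INR k) with (- (1)) by (field; apply not_0_INR; lia).
  rewrite Rpower_Ropp, Rpower_1; lra.
Qed.

Lemma sq_cost_tdgd n q C :
  sq_cost n (tdgd q) C = (1 - q) ^ 2 * sq_cost n (fun i j => q ^ (i + j)) C.
Proof.
  unfold sq_cost. fold (sq_sum n (fun i j => tdgd q i j * INR (length (C i j)))).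
  fold (sq_sum n (fun i j => q ^ (i + j) * INR (length (C i j)))).
  rewrite <- sq_sum_scal. apply sq_sum_ext; intros. unfold tdgd. ring.
Qed.

Theorem theorem2 (k : nat) (hk : (1 <= k)%nat) (T : nat -> nat -> word)
  (HT : optimal_fin k (qk k) T) :
  optimal_tdgd (qk k)
    (fun i j => T (i mod k)%nat (j mod k)%nat ++ unary (i / k)%nat ++ unary (j / k)%nat).
Proof.
  change (optimal_tdgd (qk k) (composed_code k T)).
  assert (Hq : 0 < qk k) by (unfold qk, Rpower; apply exp_pos).
  split; [exact (composed_prefix_code k T hk (proj1 HT))|].
  intros D HD n.
  destruct (composed_cost_le k hk (qk k) Hq (qk_pow_k k hk) T HT D n HD) as [m Hm].
  exists m. rewrite !sq_cost_tdgd. apply Rmult_le_compat_l; [apply pow2_ge_0|exact Hm].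
Qed.
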